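(* Fix an integer $k\ge 1$ and a real $0<\phi<\infty$, and let $\psi = \phi/(k+\phi)$. For $n\ge k$ let $R_n\sim\mathrm{Spillage}(n,k,\phi)$ and $H_\ell = H_\ell(n) = \phi^\ell\,S(n-\ell,k,\phi)/S(n,k,\phi)$. Then for each fixed integer $\ell\ge 0$, $H_\ell\to\psi^\ell$ as $n\to\infty$. Moreover, writing $\mu_n,\sigma_n^2,\gamma_n,\kappa_n$ for the mean, variance, skewness and kurtosis of $R_n$, as $n\to\infty$, $$\mu_n\sim (n-k)(1-\psi),\qquad \sigma_n^2\sim (n-k)\psi(1-\psi),$$ $$\gamma_n\sim \frac{2(\psi-1/2)}{\sqrt{(n-k)\psi(1-\psi)}},\qquad \kappa_n\sim 3+\frac{1-6\psi(1-\psi)}{(n-k)\psi(1-\psi)}.$$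
   Context: $S(j,k)$ denotes the (central) Stirling numbers of the second kind. The noncentral Stirling numbers of the second kind are $S(n,k,\phi) = \sum_{r=0}^{n-k}\binom{n}{k+r}\phi^{n-k-r}S(k+r,k)$, with $S(n',k,\phi)=0$ for $n'<k$. The spillage distribution $\mathrm{Spillage}(n,k,\phi)$ is the distribution on $\{0,\dots,n-k\}$ with mass function $\mathrm{Spillage}(r\mid n,k,\phi) = \binom{n}{k+r}\phi^{n-k-r}S(k+r,k)/S(n,k,\phi)$. Skewness is the third central moment divided by variance$^{3/2}$; kurtosis is the fourth central moment divided by variance$^2$. $a_n\sim b_n$ means $a_n/b_n\to 1$ as $n\to\infty$. *)

From Stdlib Require Import Reals Lra.
From Coquelicot Require Import Coquelicot.
Open Scope R_scope.

Fixpoint binom (n m : nat) : nat :=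
  match n, m with
  | _, O => 1%nat
  | O, S _ => 0%nat
  | S n', S m' => (binom n' m' + binom n' (S m'))%nat
  end.

Fixpoint stirling2 (n k : nat) : nat :=
  match n, k with
  | O, O => 1%nat
  | O, S _ => 0%nat
  | S _, O => 0%nat
  | S n', S k' => (S k' * stirling2 n' (S k') + stirling2 n' k')%nat
  end.

Definition nc_term (n k : nat) (phi : R) (r : nat) : R :=
  INR (binom n (k + r)) * phi ^ (n - k - r) * INR (stirling2 (k + r) k).

Definition ncstirling2 (n k : nat) (phi : R) : R :=
  if Nat.ltb n k then 0 else sum_f_R0 (nc_term n k phi) (n - k).

Definition spillage_pmf (n k : nat) (phi : R) (r : nat) : R :=
  nc_term n k phi r / ncstirling2 n k phi.

Definition spillage_E (n k : nat) (phi : R) (g : R -> R) : R :=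
  sum_f_R0 (fun r => g (INR r) * spillage_pmf n k phi r) (n - k).

Definition spillage_mean (n k : nat) (phi : R) : R :=
  spillage_E n k phi (fun x => x).

Definition spillage_cmoment (j n k : nat) (phi : R) : R :=
  spillage_E n k phi (fun x => (x - spillage_mean n k phi) ^ j).

Definition spillage_var (n k : nat) (phi : R) : R := spillage_cmoment 2 n k phi.

Definition spillage_skew (n k : nat) (phi : R) : R :=
  spillage_cmoment 3 n k phi / (sqrt (spillage_var n k phi)) ^ 3.

Definition spillage_kurt (n k : nat) (phi : R) : R :=
  spillage_cmoment 4 n k phi / (spillage_var n k phi) ^ 2.

Definition Hl (k : nat) (phi : R) (l n : nat) : R :=
  phi ^ l * ncstirling2 (n - l) k phi / ncstirling2 n k phi.

Definition asymp_eq (a b : nat -> R) : Prop :=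
  is_lim_seq (fun n => a n / b n) 1.

(* Let X = n - k - R.  The absorption identity for binomial coefficients shows that the
   factorial moments of X are E[(X)_m] = (n)_m H_m(n).  By the recurrence
   S(n+1,k,phi) = (k+phi) S(n,k,phi) + S(n,k-1,phi) and the bound
   S(n,k-1,phi) <= (k-1+phi)^n, the sequence S(n,k,phi) (k+phi)^(-n) converges at the
   geometric rate rho = (k-1+phi)/(k+phi) < 1, hence H_m(n) = psi^m + O(rho^n).  So the
   factorial moments of X differ from those of Binomial(n, psi), namely (n)_m psi^m, by
   rapidly decreasing sequences, and so do the central moments, which are polynomials in
   the factorial moments.  The central moments of R therefore agree up to o(1) with those
   of Binomial(n, 1 - psi), whose explicit values give the four asymptotic formulas. *)

From Stdlib Require Import Reals Lra Lia Arith.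
From Coquelicot Require Import Coquelicot.
Open Scope R_scope.

Lemma binom_eq_0 n m : (n < m)%nat -> binom n m = 0%nat.
Proof.
  revert m; induction n; intros m Hm; destruct m; simpl; try lia; auto.
  rewrite !IHn by lia. reflexivity.
Qed.

Lemma binom_diag n : binom n n = 1%nat.
Proof. induction n; simpl; auto. rewrite IHn, binom_eq_0; lia. Qed.

Lemma stirling2_eq_0 j k : (j < k)%nat -> stirling2 j k = 0%nat.
Proof.
  revert k; induction j; intros k Hk; destruct k; simpl; try lia; auto.
  rewrite !IHj by lia. lia.
Qed.

Lemma stirling2_diag k : stirling2 k k = 1%nat.
Proof. induction k; simpl; auto. rewrite IHk, stirling2_eq_0; lia. Qed.

Lemma binom_absorption n j : (binom (S n) j * (S n - j) = S n * binom n j)%nat.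
Proof.
  revert j; induction n; intros [|j].
  - reflexivity.
  - destruct j; simpl; lia.
  - simpl. lia.
  - destruct (le_lt_dec j n) as [Hj|Hj].
    + change (binom (S (S n)) (S j)) with (binom (S n) j + binom (S n) (S j))%nat.
      change (binom (S n) (S j)) with (binom n j + binom n (S j))%nat.
      pose proof (IHn j) as H1. pose proof (IHn (S j)) as H2.
      replace (S n - j)%nat with (S (n - j)) in H1 by lia.
      replace (S (S n) - S j)%nat with (S (n - j)) by lia.
      change (binom (S n) (S j)) with (binom n j + binom n (S j))%nat in H2.
      nia.
    + rewrite (binom_eq_0 (S n) (S j)) by lia.
      replace (S (S n) - S j)%nat with 0%nat by lia. lia.
Qed.

Lemma binom_absorption_R n j :
  INR (binom (S n) j) * (INR (S n) - INR j) = INR (S n) * INR (binom n j).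
Proof.
  destruct (le_lt_dec j (S n)) as [Hj|Hj].
  - rewrite <- minus_INR, <- !mult_INR by lia. f_equal. apply binom_absorption.
  - rewrite !binom_eq_0 by lia. simpl. ring.
Qed.

Fixpoint ffact (x : R) (m : nat) : R :=
  match m with O => 1 | S m' => x * ffact (x - 1) m' end.

Lemma ffact_S_r x m : ffact x (S m) = ffact x m * (x - INR m).
Proof.
  revert x; induction m; intros x.
  - simpl. ring.
  - change (ffact x (S (S m))) with (x * ffact (x - 1) (S m)).
    rewrite IHm, S_INR. simpl. ring.
Qed.

Lemma ffact_INR_0 n m : (n < m)%nat -> ffact (INR n) m = 0.
Proof.
  revert m; induction n; intros [|m] Hm; try lia.
  - simpl. ring.
  - change (ffact (INR (S n)) (S m)) with (INR (S n) * ffact (INR (S n) - 1) m).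
    rewrite S_INR, Rplus_minus_r, IHn by lia. ring.
Qed.

Lemma ffact_INR_bounds n m : 0 <= ffact (INR n) m <= INR n ^ m.
Proof.
  revert n; induction m; intros n.
  - simpl. lra.
  - destruct n.
    + simpl. lra.
    + change (ffact (INR (S n)) (S m)) with (INR (S n) * ffact (INR (S n) - 1) m).
      rewrite S_INR, Rplus_minus_r. destruct (IHm n) as [H0 H1].
      pose proof (pos_INR n). simpl.
      assert (INR n ^ m <= (INR n + 1) ^ m) by (apply pow_incr; lra).
      split; nra.
Qed.

Lemma ffact_binom n j m :
  ffact (INR n - INR j) m * INR (binom n j) = ffact (INR n) m * INR (binom (n - m) j).
Proof.
  revert n j; induction m; intros n j.
  - rewrite Nat.sub_0_r. simpl. ring.
  - destruct n as [|n].
    + destruct j; simpl; ring.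
    + change (ffact (INR (S n) - INR j) (S m))
        with ((INR (S n) - INR j) * ffact (INR (S n) - INR j - 1) m).
      change (ffact (INR (S n)) (S m)) with (INR (S n) * ffact (INR (S n) - 1) m).
      replace (INR (S n) - INR j - 1) with (INR n - INR j) by (rewrite S_INR; ring).
      replace (INR (S n) - 1) with (INR n) by (rewrite S_INR; ring).
      simpl (S n - S m)%nat.
      transitivity (INR (S n) * (ffact (INR n) m * INR (binom (n - m) j))); [|ring].
      rewrite <- IHm.
      transitivity (ffact (INR n - INR j) m * (INR (binom (S n) j) * (INR (S n) - INR j))); [ring|].
      rewrite binom_absorption_R. ring.
Qed.

Lemma pow_ffact x i : x ^ i = sum_f_R0 (fun m => INR (stirling2 i m) * ffact x m) i.
Proof.
  (* Summing up to any [N >= i] lets the induction step shift the summation range. *)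
  enough (H : forall N, (i <= N)%nat ->
            x ^ i = sum_f_R0 (fun m => INR (stirling2 i m) * ffact x m) N) by auto.
  induction i as [|i IH]; intros N HN.
  - induction N as [|N IHN]; [simpl; ring|].
    rewrite tech5, <- IHN by lia. simpl. ring.
  - destruct N as [|N]; [lia|].
    rewrite decomp_sum by lia. simpl pred.
    change (x ^ S i) with (x * x ^ i). rewrite (IH (S N)), scal_sum by lia.
    assert (Hshift : forall m, ffact x m * x = ffact x (S m) + INR m * ffact x m)
      by (intros m; rewrite ffact_S_r; ring).
    transitivity (sum_f_R0 (fun m => INR (stirling2 i m) * ffact x (S m)) (S N)
                  + sum_f_R0 (fun m => INR m * INR (stirling2 i m) * ffact x m) (S N)).
    { rewrite <- plus_sum. apply sum_eq. intros m _. rewrite Rmult_assoc, Hshift. ring. }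
    rewrite tech5, (decomp_sum _ (S N)) by lia. simpl pred.
    rewrite (stirling2_eq_0 i (S N)) by lia.
    replace (stirling2 (S i) 0) with 0%nat by reflexivity.
    rewrite !Rmult_0_l, !Rplus_0_l, Rplus_0_r.
    rewrite <- plus_sum. apply sum_eq. intros m _.
    change (stirling2 (S i) (S m)) with (S m * stirling2 i (S m) + stirling2 i m)%nat.
    rewrite plus_INR, mult_INR. ring.
Qed.

Lemma sum_f_R0_eq_0 F N : (forall i, (i <= N)%nat -> F i = 0) -> sum_f_R0 F N = 0.
Proof.
  intros H. induction N as [|N IH]; simpl; [apply H; lia|].
  rewrite IH by (intros; apply H; lia). rewrite H by lia. ring.
Qed.

Lemma sum_f_R0_extend F M N : (M <= N)%nat ->
  (forall i, (M < i <= N)%nat -> F i = 0) -> sum_f_R0 F N = sum_f_R0 F M.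
Proof.
  intros HMN H. induction N as [|N IH].
  - replace M with 0%nat by lia. reflexivity.
  - destruct (Nat.eq_dec M (S N)) as [->|HM]; [reflexivity|].
    rewrite tech5, IH by (lia || intros; apply H; lia). rewrite H by lia. ring.
Qed.

Lemma sum_f_R0_skip F k N : (k <= N)%nat -> (forall i, (i < k)%nat -> F i = 0) ->
  sum_f_R0 F N = sum_f_R0 (fun i => F (k + i)%nat) (N - k).
Proof.
  intros HkN H. destruct k as [|k].
  - rewrite Nat.sub_0_r. reflexivity.
  - rewrite (tech2 F k N), sum_f_R0_eq_0 by (lia || intros; apply H; lia). ring.
Qed.

(** * Noncentral Stirling numbers *)

Section NoncentralStirling.
Variable phi : R.

Lemma ncstirling2_sum n k N : (n <= N)%nat ->
  ncstirling2 n k phi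
  = sum_f_R0 (fun j => INR (binom n j) * phi ^ (n - j) * INR (stirling2 j k)) N.
Proof.
  intros HnN. unfold ncstirling2.
  rewrite (sum_f_R0_extend _ n N) by (auto; intros; (rewrite binom_eq_0 by lia); simpl; ring).
  destruct (Nat.ltb_spec n k).
  - symmetry. apply sum_f_R0_eq_0. intros j Hj.
    rewrite stirling2_eq_0 by lia. simpl. ring.
  - rewrite (sum_f_R0_skip _ k n) by (auto; intros; (rewrite stirling2_eq_0 by lia); simpl; ring).
    apply sum_eq. intros i _. unfold nc_term. do 3 f_equal. lia.
Qed.

Lemma ncstirling2_succ n k :
  ncstirling2 (S n) k phi = phi * ncstirling2 n k phi
    + sum_f_R0 (fun i => INR (binom n i) * phi ^ (n - i) * INR (stirling2 (S i) k)) n.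
Proof.
  rewrite (ncstirling2_sum (S n) k (S n)), (ncstirling2_sum n k (S n)) by lia.
  rewrite !(decomp_sum _ (S n)) by lia. simpl pred.
  set (t i := INR (binom n i) * phi ^ (n - i) * INR (stirling2 (S i) k)).
  transitivity (phi ^ S n * INR (stirling2 0 k)
    + sum_f_R0 (fun i => t i + INR (binom n (S i)) * phi ^ (n - i) * INR (stirling2 (S i) k)) n).
  { rewrite Nat.sub_0_r. f_equal; [simpl; ring|].
    apply sum_eq. intros i _. unfold t.
    change (binom (S n) (S i)) with (binom n i + binom n (S i))%nat.
    rewrite plus_INR. simpl (S n - S i)%nat. ring. }
  rewrite plus_sum, Rmult_plus_distr_l, scal_sum.
  replace (sum_f_R0 (fun i => INR (binom n (S i)) * phi ^ (n - i) * INR (stirling2 (S i) k)) n)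
    with (sum_f_R0 (fun i =>
            INR (binom n (S i)) * phi ^ (n - S i) * INR (stirling2 (S i) k) * phi) n).
  2:{ apply sum_eq. intros i Hi. destruct (Nat.eq_dec i n) as [->|Hin].
      - rewrite binom_eq_0 by lia. simpl. ring.
      - replace (n - i)%nat with (S (n - S i)) by lia. simpl. ring. }
  rewrite Nat.sub_0_r. destruct n; simpl; ring.
Qed.

Lemma ncstirling2_diag k : ncstirling2 k k phi = 1.
Proof.
  unfold ncstirling2. rewrite Nat.ltb_irrefl, Nat.sub_diag. simpl.
  unfold nc_term. rewrite Nat.add_0_r, binom_diag, stirling2_diag, !Nat.sub_diag. simpl. ring.
Qed.

Lemma ncstirling2_0_r n : ncstirling2 n 0 phi = phi ^ n.
Proof.
  induction n as [|n IH]; [apply ncstirling2_diag|].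
  rewrite ncstirling2_succ, IH, sum_f_R0_eq_0 by (intros; simpl; ring). simpl. ring.
Qed.

Lemma ncstirling2_succ_succ n k :
  ncstirling2 (S n) (S k) phi
  = (INR (S k) + phi) * ncstirling2 n (S k) phi + ncstirling2 n k phi.
Proof.
  rewrite ncstirling2_succ, (ncstirling2_sum n (S k) n), (ncstirling2_sum n k n) by lia.
  rewrite Rmult_plus_distr_r, !scal_sum, Rplus_comm, Rplus_assoc, <- !plus_sum.
  apply sum_eq. intros i _.
  change (stirling2 (S i) (S k)) with (S k * stirling2 i (S k) + stirling2 i k)%nat.
  rewrite plus_INR, mult_INR. ring.
Qed.

Lemma ncstirling2_nonneg n k : 0 <= phi -> 0 <= ncstirling2 n k phi.
Proof.
  intros Hphi. rewrite (ncstirling2_sum n k n) by lia. apply cond_pos_sum. intros j.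
  repeat apply Rmult_le_pos; try apply pos_INR. apply pow_le; lra.
Qed.

Lemma ncstirling2_ffact n k m :
  sum_f_R0 (fun j => ffact (INR n - INR j) m * INR (binom n j) * phi ^ (n - j)
                     * INR (stirling2 j k)) n
  = ffact (INR n) m * phi ^ m * ncstirling2 (n - m) k phi.
Proof.
  destruct (le_lt_dec m n) as [Hmn|Hnm].
  2:{ rewrite ffact_INR_0, sum_f_R0_eq_0 by (lia || intros j Hj;
        (rewrite ffact_binom, ffact_INR_0 by lia); ring). ring. }
  rewrite (ncstirling2_sum (n - m) k n), scal_sum by lia.
  apply sum_eq. intros j Hj. rewrite ffact_binom.
  destruct (le_lt_dec j (n - m)) as [Hj'|Hj'].
  - replace (n - j)%nat with (m + (n - m - j))%nat by lia. rewrite pow_add. ring.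
  - rewrite (binom_eq_0 (n - m) j) by lia. simpl. ring.
Qed.

End NoncentralStirling.

Section Estimates.
Variable phi : R.
Hypothesis hphi : 0 < phi.

(* With K = k+1+phi and K' = k+phi we have K - K' = 1, so the recurrence maps the bound
   K^n - K'^n exactly to K^(n+1) - K'^(n+1). *)
Lemma ncstirling2_le_pow_sub n k :
  ncstirling2 n (S k) phi <= (INR (S k) + phi) ^ n - (INR k + phi) ^ n.
Proof.
  revert k; induction n as [|n IH]; intros k.
  { change (ncstirling2 0 (S k) phi) with 0. simpl. lra. }
  assert (Hprev : ncstirling2 n k phi <= (INR k + phi) ^ n).
  { destruct k as [|k]; [rewrite ncstirling2_0_r, Rplus_0_l; lra|].
    pose proof (IH k).
    assert (0 <= (INR k + phi) ^ n) by (apply pow_le; pose proof (pos_INR k); lra).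
    lra. }
  assert (HK : 0 <= INR (S k) + phi) by (pose proof (pos_INR (S k)); lra).
  pose proof (Rmult_le_compat_l _ _ _ HK (IH k)).
  rewrite ncstirling2_succ_succ. rewrite S_INR in *. simpl. lra.
Qed.

Lemma ncstirling2_le_pow n k : ncstirling2 n k phi <= (INR k + phi) ^ n.
Proof.
  destruct k as [|k]; [rewrite ncstirling2_0_r, Rplus_0_l; lra|].
  pose proof (ncstirling2_le_pow_sub n k).
  assert (0 <= (INR k + phi) ^ n) by (apply pow_le; pose proof (pos_INR k); lra). lra.
Qed.

(* The bounded difference D(i) satisfies D(i+1) = (k+1+phi) D(i) + S(m+i,k,phi), and the
   increment is at most (k+phi)^(m+i) by [ncstirling2_le_pow]. *)
Lemma ncstirling2_shift_bounds k m i :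
  0 <= ncstirling2 (m + i) (S k) phi - (INR (S k) + phi) ^ i * ncstirling2 m (S k) phi
    <= INR i * (INR (S k) + phi) ^ i * (INR k + phi) ^ m.
Proof.
  set (K := INR (S k) + phi). set (K' := INR k + phi).
  assert (HK' : 0 <= K') by (unfold K'; pose proof (pos_INR k); lra).
  assert (HKK' : K = K' + 1) by (unfold K, K'; rewrite S_INR; ring).
  induction i as [|i IH]; [rewrite Nat.add_0_r; simpl; lra|].
  rewrite Nat.add_succ_r, ncstirling2_succ_succ. fold K.
  pose proof (ncstirling2_nonneg phi (m + i) k (Rlt_le _ _ hphi)).
  pose proof (ncstirling2_le_pow (m + i) k) as Hle. fold K' in Hle.
  assert (Hpow : K' ^ (m + i) <= K' ^ m * K ^ S i).
  { rewrite pow_add. apply Rmult_le_compat_l; [apply pow_le; lra|].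
    apply Rle_trans with (K ^ i); [apply pow_incr; lra|].
    simpl. pose proof (pow_le K i). nra. }
  assert (0 <= K' ^ m) by (apply pow_le; lra).
  assert (0 <= K ^ i) by (apply pow_le; lra).
  rewrite S_INR. simpl pow in *. destruct IH as [IH0 IH1].
  split; [nra|].
  assert (HKm := Rmult_le_compat_l K _ _ ltac:(lra) IH1). nra.
Qed.

Lemma ncstirling2_ge_pow n k : (S k <= n)%nat ->
  (INR (S k) + phi) ^ (n - S k) <= ncstirling2 n (S k) phi.
Proof.
  intros Hn. destruct (ncstirling2_shift_bounds k (S k) (n - S k)) as [H _].
  rewrite ncstirling2_diag in H. replace (S k + (n - S k))%nat with n in H by lia. lra.
Qed.

Lemma ncstirling2_pos n k : (S k <= n)%nat -> 0 < ncstirling2 n (S k) phi.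
Proof.
  intros Hn. eapply Rlt_le_trans; [|apply ncstirling2_ge_pow; auto].
  apply pow_lt. pose proof (pos_INR (S k)); lra.
Qed.

Lemma Hl_bounds k i n : (S k <= n)%nat -> (i <= n)%nat ->
  0 <= (phi / (INR (S k) + phi)) ^ i - Hl (S k) phi i n
    <= INR i * (phi / (INR k + phi)) ^ i * (INR (S k) + phi) ^ S k
       * ((INR k + phi) / (INR (S k) + phi)) ^ n.
Proof.
  intros Hkn Hin. unfold Hl.
  set (K := INR (S k) + phi). set (K' := INR k + phi).
  assert (HK' : 0 < K') by (unfold K'; pose proof (pos_INR k); lra).
  assert (HK : 0 < K) by (unfold K; pose proof (pos_INR (S k)); lra).
  destruct (ncstirling2_shift_bounds k (n - i) i) as [D0 D1].
  replace (n - i + i)%nat with n in D0, D1 by lia. fold K K' in D0, D1.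
  pose proof (ncstirling2_ge_pow n k Hkn) as Hlow. fold K in Hlow.
  set (g := ncstirling2 n (S k) phi) in *. set (g0 := ncstirling2 (n - i) (S k) phi) in *.
  assert (HKn : 0 < K ^ (n - S k)) by (apply pow_lt; lra).
  assert (HKi : 0 < K ^ i) by (apply pow_lt; lra).
  assert (Hphii : 0 < phi ^ i) by (apply pow_lt; lra).
  assert (Hdiff : (phi / K) ^ i - phi ^ i * g0 / g = phi ^ i * (g - K ^ i * g0) / (K ^ i * g)).
  { unfold Rdiv. rewrite Rpow_mult_distr, pow_inv. field. lra. }
  rewrite Hdiff. split.
  - apply Rmult_le_pos; [apply Rmult_le_pos; lra|].
    left. apply Rinv_0_lt_compat. nra.
  - apply Rle_trans with (phi ^ i * (INR i * K ^ i * K' ^ (n - i)) / (K ^ i * K ^ (n - S k))).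
    + unfold Rdiv. apply Rmult_le_compat.
      * apply Rmult_le_pos; lra.
      * left. apply Rinv_0_lt_compat. nra.
      * apply Rmult_le_compat_l; lra.
      * apply Rinv_le_contravar; [nra|]. apply Rmult_le_compat_l; lra.
    + right. unfold Rdiv. rewrite !Rpow_mult_distr, !pow_inv.
      replace (K ^ n) with (K ^ (n - S k) * K ^ S k) by (rewrite <- pow_add; f_equal; lia).
      replace (K' ^ n) with (K' ^ (n - i) * K' ^ i) by (rewrite <- pow_add; f_equal; lia).
      field. repeat split; apply pow_nonzero; lra.
Qed.

End Estimates.

Lemma is_lim_seq_pow u (l : R) p :
  is_lim_seq u l -> is_lim_seq (fun n => u n ^ p) (l ^ p).
Proof.
  intros H. induction p as [|p IH]; [apply is_lim_seq_const|].
  apply is_lim_seq_mult'; auto.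
Qed.

Lemma is_lim_seq_sqrt u (l : R) :
  0 <= l -> is_lim_seq u l -> is_lim_seq (fun n => sqrt (u n)) (sqrt l).
Proof. intros Hl H. apply is_lim_seq_continuous; auto. apply continuity_pt_sqrt; auto. Qed.

Lemma is_lim_seq_inv_INR : is_lim_seq (fun n => / INR n) 0.
Proof.
  replace (Finite 0) with (Rbar_inv p_infty) by reflexivity.
  apply is_lim_seq_inv; [apply is_lim_seq_INR | discriminate].
Qed.

Ltac seq_limit :=
  lazymatch goal with
  | |- is_lim_seq (fun _ => ?c) _ => apply is_lim_seq_const
  | |- is_lim_seq (fun n => _ + _) _ => apply is_lim_seq_plus'; seq_limit
  | |- is_lim_seq (fun n => _ - _) _ => apply is_lim_seq_minus'; seq_limit
  | |- is_lim_seq (fun n => _ * _) _ => apply is_lim_seq_mult'; seq_limit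
  | |- is_lim_seq (fun n => _ / _) _ => apply is_lim_seq_div'; [seq_limit | seq_limit | ]
  | |- is_lim_seq (fun n => _ ^ _) _ => apply is_lim_seq_pow; seq_limit
  | |- is_lim_seq (fun n => sqrt _) _ => apply is_lim_seq_sqrt; [ | seq_limit]
  | |- is_lim_seq (fun n => / INR n) _ => apply is_lim_seq_inv_INR
  | |- _ => eassumption
  end.

Lemma is_lim_seq_eq_target u (a b : R) : a = b -> is_lim_seq u a -> is_lim_seq u b.
Proof. intros ->; auto. Qed.

Lemma is_lim_seq_eventually_pos u (l : R) :
  is_lim_seq u l -> 0 < l -> eventually (fun n => 0 < u n).
Proof.
  intros H Hl. apply is_lim_seq_spec in H. destruct (H (mkposreal _ Hl)) as [N HN].
  exists N. intros n Hn. specialize (HN n Hn). simpl in HN.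
  apply Rabs_lt_between in HN. lra.
Qed.

Lemma is_lim_seq_eventually_neq_0 u (l : R) : is_lim_seq u l -> l <> 0 ->
  eventually (fun n => u n <> 0).
Proof.
  intros H Hl. destruct (is_lim_seq_eventually_pos (fun n => Rabs (u n)) (Rabs l)) as [N HN].
  - apply (is_lim_seq_abs u l H).
  - apply Rabs_pos_lt, Hl.
  - exists N. intros n Hn Hu. specialize (HN n Hn). rewrite Hu, Rabs_R0 in HN. lra.
Qed.

Lemma asymp_eq_scaled (a b s : nat -> R) (l : R) : l <> 0 ->
  eventually (fun n => s n <> 0) ->
  is_lim_seq (fun n => a n * s n) l -> is_lim_seq (fun n => b n * s n) l -> asymp_eq a b.
Proof.
  intros Hl [N HN] Ha Hb. unfold asymp_eq.
  destruct (is_lim_seq_eventually_neq_0 _ _ Hb Hl) as [M HM].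
  apply is_lim_seq_ext_loc with (fun n => (a n * s n) / (b n * s n)).
  - exists (N + M)%nat. intros n Hn.
    specialize (HN n ltac:(lia)). specialize (HM n ltac:(lia)).
    field. split; auto. intros Hb0. apply HM. rewrite Hb0. ring.
  - apply (is_lim_seq_eq_target _ (l / l)); [field; auto|].
    apply is_lim_seq_div'; auto.
Qed.

Lemma eventually_inv_INR_neq_0 : eventually (fun n => / INR n <> 0).
Proof. exists 1%nat. intros n Hn. apply Rinv_neq_0_compat, not_0_INR. lia. Qed.

Lemma INR_sub_factor n j : (j <= n)%nat -> (0 < n)%nat ->
  INR (n - j) = INR n * (1 - INR j * / INR n).
Proof.
  intros Hjn Hn. assert (0 < INR n) by (apply lt_0_INR; lia).
  rewrite minus_INR by lia. field. lra.
Qed.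

Lemma sub_div_INR_pos n j : (j < n)%nat -> 0 < 1 - INR j * / INR n.
Proof.
  intros Hjn. assert (INR j < INR n) by (apply lt_INR; lia).
  assert (0 < INR n) by (apply lt_0_INR; lia).
  apply Rlt_0_minus, (Rmult_lt_reg_r (INR n)); [lra|].
  rewrite Rmult_assoc, Rinv_l; lra.
Qed.

(** * Rapidly decreasing and moderately growing sequences *)

Definition rapid (d : nat -> R) : Prop :=
  forall p, is_lim_seq (fun n => INR n ^ p * d n) 0.

Definition moderate (x : nat -> R) : Prop :=
  exists p, eventually (fun n => Rabs (x n) <= INR n ^ p).

Definition rapid_eq (x y : nat -> R) : Prop := rapid (fun n => x n - y n).

Lemma eventually_INR_ge (c : R) : eventually (fun n => c <= INR n).
Proof.
  destruct (proj2 (is_lim_seq_spec INR p_infty) is_lim_seq_INR c) as [N HN].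
  exists N. intros n Hn. left. auto.
Qed.

Lemma rapid_lim d : rapid d -> is_lim_seq d 0.
Proof. intros H. apply (is_lim_seq_ext _ _ _ (fun n => Rmult_1_l (d n)) (H 0%nat)). Qed.

Lemma rapid_le d e : rapid e -> eventually (fun n => Rabs (d n) <= e n) -> rapid d.
Proof.
  intros He [N HN] p. apply is_lim_seq_abs_0.
  apply is_lim_seq_le_le_loc with (fun _ => 0) (fun n => INR n ^ p * e n).
  - exists N. intros n Hn. split; [apply Rabs_pos|].
    rewrite Rabs_mult, Rabs_pos_eq by (apply pow_le, pos_INR).
    apply Rmult_le_compat_l; [apply pow_le, pos_INR | auto].
  - apply is_lim_seq_const.
  - apply He.
Qed.

Lemma rapid_geom r : 0 <= r < 1 -> rapid (fun n => r ^ n).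
Proof.
  intros [Hr0 Hr1] p. destruct (Req_dec r 0) as [->|Hr].
  { apply is_lim_seq_ext_loc with (fun _ => 0); [|apply is_lim_seq_const].
    exists 1%nat. intros [|n] Hn; [lia|]. simpl. ring. }
  (* By d'Alembert's ratio test the series of (n+1)^p r^n converges, so its terms vanish. *)
  apply is_lim_seq_incr_1.
  set (a n := INR (S n) ^ p * r ^ n).
  assert (Hpos : forall n, 0 < a n).
  { intros n. apply Rmult_lt_0_compat; apply pow_lt; [apply lt_0_INR; lia | lra]. }
  assert (Hratio : is_lim_seq (fun n => Rabs (a (S n) / a n)) r).
  { apply is_lim_seq_ext with (fun n => (1 + / INR (S n)) ^ p * r).
    { intros n. pose proof (Hpos n). pose proof (Hpos (S n)).
      rewrite Rabs_pos_eq by (apply Rlt_le, Rdiv_lt_0_compat; auto).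
      assert (0 < INR (S n)) by (apply lt_0_INR; lia).
      unfold a. rewrite (S_INR (S n)).
      replace (INR (S n) + 1) with ((1 + / INR (S n)) * INR (S n)) by (field; lra).
      rewrite Rpow_mult_distr. simpl pow at 4. field.
      split; apply pow_nonzero; lra. }
    apply (is_lim_seq_eq_target _ ((1 + 0) ^ p * r)); [rewrite Rplus_0_r, pow1; ring|].
    apply is_lim_seq_mult'; [|apply is_lim_seq_const].
    apply is_lim_seq_pow, is_lim_seq_plus'; [apply is_lim_seq_const|].
    apply (is_lim_seq_incr_1 (fun n => / INR n)), is_lim_seq_inv_INR. }
  assert (Ha0 : is_lim_seq a 0).
  { apply is_lim_seq_abs_0, ex_series_lim_0.
    apply (ex_series_DAlembert a r); auto. intros n. pose proof (Hpos n). lra. }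
  apply is_lim_seq_ext with (fun n => r * a n); [intros n; unfold a; simpl; ring|].
  apply (is_lim_seq_eq_target _ (r * 0)); [ring|]. apply is_lim_seq_mult'; auto.
  apply is_lim_seq_const.
Qed.

Lemma rapid_plus d e : rapid d -> rapid e -> rapid (fun n => d n + e n).
Proof.
  intros Hd He p. apply (is_lim_seq_eq_target _ (0 + 0)); [ring|].
  apply is_lim_seq_ext with (fun n => INR n ^ p * d n + INR n ^ p * e n); [intros; ring|].
  apply is_lim_seq_plus'; auto.
Qed.

Lemma rapid_mul x d : moderate x -> rapid d -> rapid (fun n => x n * d n).
Proof.
  intros [q [N HN]] Hd. apply (rapid_le _ (fun n => INR n ^ q * Rabs (d n))).
  - intros p. apply is_lim_seq_ext with (fun n => Rabs (INR n ^ (p + q) * d n)).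
    { intros n. rewrite Rabs_mult, Rabs_pos_eq, pow_add by (apply pow_le, pos_INR). ring. }
    apply (proj1 (is_lim_seq_abs_0 _)), Hd.
  - exists N. intros n Hn. rewrite Rabs_mult.
    apply Rmult_le_compat_r; [apply Rabs_pos | auto].
Qed.

Lemma moderate_const c : moderate (fun _ => c).
Proof.
  exists 1%nat. destruct (eventually_INR_ge (Rabs c)) as [N HN].
  exists N. intros n Hn. rewrite pow_1. auto.
Qed.

Lemma moderate_mul x y : moderate x -> moderate y -> moderate (fun n => x n * y n).
Proof.
  intros [p [N HN]] [q [M HM]]. exists (p + q)%nat, (N + M)%nat. intros n Hn.
  rewrite Rabs_mult, pow_add.
  apply Rmult_le_compat; try apply Rabs_pos; [apply HN | apply HM]; lia.
Qed.

Lemma moderate_plus x y : moderate x -> moderate y -> moderate (fun n => x n + y n).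
Proof.
  intros [p [N HN]] [q [M HM]]. exists (S (p + q)), (N + M + 2)%nat. intros n Hn.
  assert (H2 : 2 <= INR n) by (apply (le_INR 2); lia).
  assert (Hp : INR n ^ p <= INR n ^ (p + q)) by (apply Rle_pow; lra || lia).
  assert (Hq : INR n ^ q <= INR n ^ (p + q)) by (apply Rle_pow; lra || lia).
  pose proof (HN n ltac:(lia)). pose proof (HM n ltac:(lia)).
  pose proof (pow_le (INR n) (p + q) ltac:(lra)).
  eapply Rle_trans; [apply Rabs_triang|]. simpl. nra.
Qed.

Lemma moderate_ffact m : moderate (fun n => ffact (INR n) m).
Proof.
  exists m, 0%nat. intros n _. destruct (ffact_INR_bounds n m).
  rewrite Rabs_pos_eq; lra.
Qed.

Lemma moderate_rapid_eq x y : rapid_eq x y -> moderate y -> moderate x.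
Proof.
  intros Hxy Hy.
  assert (Hd : moderate (fun n => x n - y n)).
  { exists 0%nat. apply rapid_lim, is_lim_seq_spec in Hxy.
    destruct (Hxy (mkposreal 1 Rlt_0_1)) as [N HN]. exists N. intros n Hn.
    specialize (HN n Hn). simpl in *. rewrite Rminus_0_r in HN. lra. }
  destruct (moderate_plus _ _ Hd Hy) as [p [N HN]]. exists p, N. intros n Hn.
  replace (x n) with (x n - y n + y n) by ring. auto.
Qed.

Lemma rapid_ext d e : eventually (fun n => e n = d n) -> rapid e -> rapid d.
Proof.
  intros [N HN] He p. apply (is_lim_seq_ext_loc (fun n => INR n ^ p * e n)); [|apply He].
  exists N. intros n Hn. rewrite HN; auto.
Qed.

Lemma rapid_eq_refl x : rapid_eq x x.
Proof.
  intros p. apply is_lim_seq_ext with (fun _ => 0); [intros n; ring | apply is_lim_seq_const].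
Qed.

Lemma rapid_eq_plus x1 x2 y1 y2 : rapid_eq x1 y1 -> rapid_eq x2 y2 ->
  rapid_eq (fun n => x1 n + x2 n) (fun n => y1 n + y2 n).
Proof.
  intros H1 H2. eapply rapid_ext; [|apply (rapid_plus _ _ H1 H2)]. exists 0%nat. intros n _. ring.
Qed.

Lemma rapid_eq_mul x1 x2 y1 y2 : rapid_eq x1 y1 -> rapid_eq x2 y2 ->
  moderate y1 -> moderate y2 -> rapid_eq (fun n => x1 n * x2 n) (fun n => y1 n * y2 n).
Proof.
  intros H1 H2 M1 M2. eapply rapid_ext.
  2:{ apply rapid_plus; apply rapid_mul;
        [apply (moderate_rapid_eq x1 y1) | apply H2 | apply M2 | apply H1]; auto. }
  exists 0%nat. intros n _. ring.
Qed.

Lemma moderate_pow x m : moderate x -> moderate (fun n => x n ^ m).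
Proof.
  intros Hx. induction m as [|m IH]; [apply (moderate_const 1)|].
  apply (moderate_mul _ _ Hx IH).
Qed.

Lemma rapid_eq_pow x y m : rapid_eq x y -> moderate y ->
  rapid_eq (fun n => x n ^ m) (fun n => y n ^ m).
Proof.
  intros Hxy Hy. induction m as [|m IH]; [apply rapid_eq_refl|].
  apply (rapid_eq_mul _ _ _ _ Hxy IH Hy (moderate_pow _ _ Hy)).
Qed.

Lemma moderate_sum (x : nat -> nat -> R) N : (forall i, (i <= N)%nat -> moderate (x i)) ->
  moderate (fun n => sum_f_R0 (fun i => x i n) N).
Proof.
  intros H. induction N as [|N IH]; [apply H; lia|].
  apply moderate_plus; [apply IH; intros; apply H|apply H]; lia.
Qed.

Lemma rapid_eq_sum (x y : nat -> nat -> R) N :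
  (forall i, (i <= N)%nat -> rapid_eq (x i) (y i)) ->
  rapid_eq (fun n => sum_f_R0 (fun i => x i n) N) (fun n => sum_f_R0 (fun i => y i n) N).
Proof.
  intros H. induction N as [|N IH]; [apply H; lia|].
  apply rapid_eq_plus; [apply IH; intros; apply H|apply H]; lia.
Qed.

Lemma rapid_eq_lim x y s (ls l : R) : rapid_eq x y -> is_lim_seq s ls ->
  is_lim_seq (fun n => y n * s n) l -> is_lim_seq (fun n => x n * s n) l.
Proof.
  intros Hxy Hs Hy. apply (is_lim_seq_eq_target _ (0 * ls + l)); [ring|].
  apply is_lim_seq_ext with (fun n => (x n - y n) * s n + y n * s n); [intros; ring|].
  apply is_lim_seq_plus'; auto. apply is_lim_seq_mult'; auto. apply rapid_lim, Hxy.
Qed.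

(** * Moments in terms of factorial moments *)

(* For factorial moments [f m = E[(X)_m]] these are [E[X^i]] and [E[(E X - X)^j]]. *)
Definition raw_from_factorial (f : nat -> R) (i : nat) : R :=
  sum_f_R0 (fun m => INR (stirling2 i m) * f m) i.

Definition central_from_factorial (f : nat -> R) (j : nat) : R :=
  sum_f_R0 (fun i => Binomial.C j i * (-1) ^ i * f 1%nat ^ (j - i) * raw_from_factorial f i) j.

(* [ffact x m * p ^ m] are the factorial moments of Binomial(x, p). *)
Lemma central_from_factorial_binomial_2 x p :
  central_from_factorial (fun m => ffact x m * p ^ m) 2 = x * p * (1 - p).
Proof. unfold central_from_factorial, raw_from_factorial, Binomial.C. simpl. field. Qed.

Lemma central_from_factorial_binomial_3 x p :
  central_from_factorial (fun m => ffact x m * p ^ m) 3 = x * p * (1 - p) * (2 * p - 1).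
Proof. unfold central_from_factorial, raw_from_factorial, Binomial.C. simpl. field. Qed.

Lemma central_from_factorial_binomial_4 x p :
  central_from_factorial (fun m => ffact x m * p ^ m) 4
  = x * p * (1 - p) * (1 + 3 * (x - 2) * p * (1 - p)).
Proof. unfold central_from_factorial, raw_from_factorial, Binomial.C. simpl. field. Qed.

Section FactorialMomentsComparison.
Variables f g : nat -> nat -> R.
Hypothesis f_g : forall m, rapid_eq (f m) (g m).
Hypothesis g_moderate : forall m, moderate (g m).

Lemma moderate_raw_from_factorial i : moderate (fun n => raw_from_factorial (fun m => g m n) i).
Proof.
  apply moderate_sum. intros m _. apply moderate_mul; [apply moderate_const | apply g_moderate].
Qed.

Lemma rapid_eq_raw_from_factorial i :
  rapid_eq (fun n => raw_from_factorial (fun m => f m n) i)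
           (fun n => raw_from_factorial (fun m => g m n) i).
Proof.
  apply rapid_eq_sum. intros m _.
  apply rapid_eq_mul; [apply rapid_eq_refl | apply f_g | apply moderate_const | apply g_moderate].
Qed.

Lemma rapid_eq_central_from_factorial j :
  rapid_eq (fun n => central_from_factorial (fun m => f m n) j)
           (fun n => central_from_factorial (fun m => g m n) j).
Proof.
  apply rapid_eq_sum. intros i _.
  apply rapid_eq_mul.
  - apply rapid_eq_mul; [apply rapid_eq_refl | apply rapid_eq_pow; auto | apply moderate_const |].
    apply moderate_pow; auto.
  - apply rapid_eq_raw_from_factorial.
  - apply moderate_mul; [apply moderate_const | apply moderate_pow; auto].
  - apply moderate_raw_from_factorial.
Qed.

End FactorialMomentsComparison.

Section SpillageMoments.
Variables (n k : nat) (phi : R).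

Lemma spillage_E_ext g h : (forall x, g x = h x) -> spillage_E n k phi g = spillage_E n k phi h.
Proof. intros H. apply sum_eq. intros r _. rewrite H. reflexivity. Qed.

Lemma spillage_E_lin_comb (c : nat -> R) (f : nat -> R -> R) d :
  spillage_E n k phi (fun x => sum_f_R0 (fun i => c i * f i x) d)
  = sum_f_R0 (fun i => c i * spillage_E n k phi (f i)) d.
Proof.
  unfold spillage_E. induction d as [|d IH].
  - simpl. rewrite scal_sum. apply sum_eq. intros; ring.
  - simpl. rewrite <- IH, scal_sum, <- plus_sum. apply sum_eq. intros; ring.
Qed.

Lemma ncstirling2_neq_0_le : ncstirling2 n k phi <> 0 -> (k <= n)%nat.
Proof.
  unfold ncstirling2. destruct (Nat.ltb_spec n k); [tauto | auto].
Qed.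

Lemma spillage_E_ffact m : (k <= n)%nat ->
  spillage_E n k phi (fun x => ffact (INR (n - k) - x) m) = ffact (INR n) m * Hl k phi m n.
Proof.
  intros Hkn. unfold spillage_E, spillage_pmf, Hl.
  transitivity (ffact (INR n) m * phi ^ m * ncstirling2 (n - m) k phi / ncstirling2 n k phi);
    [|unfold Rdiv; ring].
  rewrite <- (ncstirling2_ffact phi n k m).
  rewrite (sum_f_R0_skip _ k n) by (auto; intros; (rewrite stirling2_eq_0 by lia); simpl; ring).
  unfold Rdiv. rewrite Rmult_comm, scal_sum. apply sum_eq. intros r Hr. unfold nc_term.
  rewrite minus_INR, plus_INR by lia. replace (n - (k + r))%nat with (n - k - r)%nat by lia.
  replace (INR n - INR k - INR r) with (INR n - (INR k + INR r)) by ring. ring.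
Qed.

Definition spillage_fmoment (m : nat) : R := ffact (INR n) m * Hl k phi m n.

Hypothesis nc_neq_0 : ncstirling2 n k phi <> 0.

Lemma spillage_mean_eq : spillage_mean n k phi = INR (n - k) - spillage_fmoment 1.
Proof.
  pose proof (ncstirling2_neq_0_le nc_neq_0) as Hkn.
  assert (H0 : spillage_fmoment 0 = 1).
  { unfold spillage_fmoment, Hl. rewrite Nat.sub_0_r. simpl. field. auto. }
  replace (INR (n - k) - spillage_fmoment 1)
    with (INR (n - k) * spillage_fmoment 0 - spillage_fmoment 1) by (rewrite H0; ring).
  unfold spillage_fmoment. rewrite <- !spillage_E_ffact by auto.
  unfold spillage_mean, spillage_E. rewrite scal_sum, <- minus_sum.
  apply sum_eq. intros r _. simpl. ring.
Qed.

Lemma spillage_cmoment_eq j :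
  spillage_cmoment j n k phi = central_from_factorial spillage_fmoment j.
Proof.
  pose proof (ncstirling2_neq_0_le nc_neq_0) as Hkn.
  unfold spillage_cmoment. rewrite spillage_mean_eq.
  set (N := INR (n - k)). set (mu := spillage_fmoment 1).
  rewrite (spillage_E_ext _ (fun x => sum_f_R0
             (fun i => Binomial.C j i * (-1) ^ i * mu ^ (j - i) * (N - x) ^ i) j)).
  (* With X = n - k - R, the centred variable R - E R is E X - X. *)
  2:{ intros x. replace (x - (N - mu)) with (-1 * (N - x) + mu) by ring.
      rewrite binomial. apply sum_eq. intros i _. rewrite Rpow_mult_distr. ring. }
  rewrite spillage_E_lin_comb. apply sum_eq. intros i _. f_equal.
  rewrite (spillage_E_ext _ (fun x => sum_f_R0
             (fun m => INR (stirling2 i m) * ffact (N - x) m) i)) by (intros; apply pow_ffact).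
  rewrite spillage_E_lin_comb. apply sum_eq. intros m _. rewrite spillage_E_ffact; auto.
Qed.

End SpillageMoments.

(** * Asymptotics *)

Section Asymptotics.
Variables (k : nat) (phi : R).
Hypothesis hphi : 0 < phi.

Local Notation psi := (phi / (INR (S k) + phi)).

Lemma psi_denom_pos : 0 < INR (S k) + phi.
Proof. pose proof (pos_INR (S k)). lra. Qed.

Lemma psi_bounds : 0 < psi < 1.
Proof.
  assert (0 < INR (S k)) by (apply lt_0_INR; lia).
  split; [apply Rdiv_lt_0_compat; lra|].
  apply Rmult_lt_reg_r with (INR (S k) + phi); [lra|].
  unfold Rdiv. rewrite Rmult_assoc, Rinv_l; lra.
Qed.

Lemma Hl_rapid i : rapid (fun n => Hl (S k) phi i n - psi ^ i).
Proof.
  set (K := INR (S k) + phi). set (K' := INR k + phi).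
  assert (0 <= K' / K < 1).
  { assert (0 < K') by (unfold K'; pose proof (pos_INR k); lra).
    assert (K = K' + 1) by (unfold K, K'; rewrite S_INR; ring).
    split; [apply Rlt_le, Rdiv_lt_0_compat; lra|].
    apply Rmult_lt_reg_r with K; [lra|]. unfold Rdiv. rewrite Rmult_assoc, Rinv_l; lra. }
  apply (rapid_le _ (fun n => (INR i * (phi / K') ^ i * K ^ S k) * (K' / K) ^ n)).
  - apply rapid_mul; [apply moderate_const | apply rapid_geom; auto].
  - exists (S k + i)%nat. intros n Hn.
    destruct (Hl_bounds phi hphi k i n) as [H0 H1]; try lia.
    rewrite Rabs_minus_sym, Rabs_pos_eq; auto.
Qed.

Lemma Hl_limit i : is_lim_seq (fun n => Hl (S k) phi i n) (psi ^ i).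
Proof.
  apply (is_lim_seq_eq_target _ (0 + psi ^ i)); [ring|].
  apply is_lim_seq_ext with (fun n => (Hl (S k) phi i n - psi ^ i) + psi ^ i); [intros; ring|].
  apply is_lim_seq_plus'; [apply rapid_lim, Hl_rapid | apply is_lim_seq_const].
Qed.

Lemma spillage_fmoment_rapid_eq m :
  rapid_eq (fun n => spillage_fmoment n (S k) phi m) (fun n => ffact (INR n) m * psi ^ m).
Proof.
  eapply rapid_ext; [|apply (rapid_mul _ _ (moderate_ffact m) (Hl_rapid m))].
  exists 0%nat. intros n _. unfold spillage_fmoment. ring.
Qed.

Lemma spillage_cmoment_rapid_eq j :
  rapid_eq (fun n => spillage_cmoment j n (S k) phi)
           (fun n => central_from_factorial (fun m => ffact (INR n) m * psi ^ m) j).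
Proof.
  eapply rapid_ext.
  2:{ apply (rapid_eq_central_from_factorial (fun m n => spillage_fmoment n (S k) phi m)).
      - apply spillage_fmoment_rapid_eq.
      - intros m. apply moderate_mul; [apply moderate_ffact | apply moderate_const]. }
  exists (S k). intros n Hn. simpl. rewrite spillage_cmoment_eq; auto.
  apply Rgt_not_eq, ncstirling2_pos; auto.
Qed.

Lemma spillage_mean_rapid_eq :
  rapid_eq (fun n => spillage_mean n (S k) phi) (fun n => INR (n - S k) - INR n * psi).
Proof.
  eapply rapid_ext.
  2:{ apply (rapid_mul (fun _ => -1) _ (moderate_const (-1)) (spillage_fmoment_rapid_eq 1)). }
  exists (S k). intros n Hn. rewrite spillage_mean_eq.
  - simpl. ring.
  - apply Rgt_not_eq, ncstirling2_pos; auto.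
Qed.

Lemma spillage_mean_scaled : is_lim_seq (fun n => spillage_mean n (S k) phi * / INR n) (1 - psi).
Proof.
  apply (rapid_eq_lim _ _ _ 0 _ spillage_mean_rapid_eq is_lim_seq_inv_INR).
  apply is_lim_seq_ext_loc with (fun n => 1 - INR (S k) * / INR n - psi).
  - exists (S k). intros n Hn. assert (0 < INR n) by (apply lt_0_INR; lia).
    rewrite minus_INR by lia. pose proof psi_denom_pos. field. split; lra.
  - apply (is_lim_seq_eq_target _ (1 - INR (S k) * 0 - psi)); [ring|]. seq_limit.
Qed.

Lemma spillage_var_scaled :
  is_lim_seq (fun n => spillage_var n (S k) phi * / INR n) (psi * (1 - psi)).
Proof.
  apply (rapid_eq_lim _ _ _ 0 _ (spillage_cmoment_rapid_eq 2) is_lim_seq_inv_INR).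
  apply is_lim_seq_ext_loc with (fun _ => psi * (1 - psi)); [|apply is_lim_seq_const].
  exists 1%nat. intros n Hn. assert (0 < INR n) by (apply lt_0_INR; lia).
  rewrite central_from_factorial_binomial_2. pose proof psi_denom_pos. field. lra.
Qed.

Lemma spillage_cmoment3_scaled :
  is_lim_seq (fun n => spillage_cmoment 3 n (S k) phi * / INR n)
             (psi * (1 - psi) * (2 * psi - 1)).
Proof.
  apply (rapid_eq_lim _ _ _ 0 _ (spillage_cmoment_rapid_eq 3) is_lim_seq_inv_INR).
  apply is_lim_seq_ext_loc with (fun _ => psi * (1 - psi) * (2 * psi - 1));
    [|apply is_lim_seq_const].
  exists 1%nat. intros n Hn. assert (0 < INR n) by (apply lt_0_INR; lia).
  rewrite central_from_factorial_binomial_3. pose proof psi_denom_pos. field. lra.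
Qed.

Lemma spillage_cmoment4_scaled :
  is_lim_seq (fun n => spillage_cmoment 4 n (S k) phi * (/ INR n) ^ 2)
             (3 * (psi * (1 - psi)) ^ 2).
Proof.
  apply (rapid_eq_lim _ _ _ (0 ^ 2) _ (spillage_cmoment_rapid_eq 4)); [seq_limit|].
  apply is_lim_seq_ext_loc with
    (fun n => psi * (1 - psi) * (/ INR n + 3 * (1 - 2 * / INR n) * psi * (1 - psi))).
  - exists 1%nat. intros n Hn. assert (0 < INR n) by (apply lt_0_INR; lia).
    rewrite central_from_factorial_binomial_4. pose proof psi_denom_pos. field. lra.
  - eapply is_lim_seq_eq_target; [|seq_limit]. ring.
Qed.

Lemma psi_var_pos : 0 < psi * (1 - psi).
Proof. pose proof psi_bounds. nra. Qed.

Lemma spillage_skew_scaled :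
  is_lim_seq (fun n => spillage_skew n (S k) phi * sqrt (INR n))
             ((2 * psi - 1) / sqrt (psi * (1 - psi))).
Proof.
  pose proof psi_var_pos as Hv. pose proof psi_denom_pos. set (v := psi * (1 - psi)) in *.
  assert (Hsv : 0 < sqrt v) by (apply sqrt_lt_R0; lra).
  pose proof spillage_cmoment3_scaled as Ha. pose proof spillage_var_scaled as Hb.
  set (a n := spillage_cmoment 3 n (S k) phi * / INR n) in Ha.
  set (b n := spillage_var n (S k) phi * / INR n) in Hb.
  destruct (is_lim_seq_eventually_pos _ _ Hb Hv) as [N HN].
  apply is_lim_seq_ext_loc with (fun n => a n / sqrt (b n) ^ 3).
  - exists (S N). intros n Hn. specialize (HN n ltac:(lia)).
    assert (Hn0 : 0 < INR n) by (apply lt_0_INR; lia).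
    unfold spillage_skew.
    replace (spillage_var n (S k) phi) with (INR n * b n) by (unfold b; field; lra).
    rewrite (sqrt_mult_alt (INR n)) by lra.
    assert (0 < sqrt (b n)) by (apply sqrt_lt_R0; lra).
    assert (0 < sqrt (INR n)) by (apply sqrt_lt_R0; lra).
    unfold a. rewrite <- (sqrt_sqrt (INR n)) at 1 by lra. field. split; lra.
  - apply (is_lim_seq_eq_target _ (v * (2 * psi - 1) / sqrt v ^ 3)).
    + rewrite <- (sqrt_sqrt v) at 1 by lra. field. split; lra.
    + seq_limit; [lra|]. apply pow_nonzero. lra.
Qed.

Lemma spillage_kurt_limit : is_lim_seq (fun n => spillage_kurt n (S k) phi) 3.
Proof.
  pose proof psi_var_pos as Hv. set (v := psi * (1 - psi)) in *.
  pose proof spillage_cmoment4_scaled as Ha. pose proof spillage_var_scaled as Hb.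
  set (a n := spillage_cmoment 4 n (S k) phi * (/ INR n) ^ 2) in Ha.
  set (b n := spillage_var n (S k) phi * / INR n) in Hb.
  destruct (is_lim_seq_eventually_pos _ _ Hb Hv) as [N HN].
  apply is_lim_seq_ext_loc with (fun n => a n / b n ^ 2).
  - exists (S N). intros n Hn. specialize (HN n ltac:(lia)).
    assert (0 < INR n) by (apply lt_0_INR; lia).
    assert (0 < spillage_var n (S k) phi).
    { apply (Rmult_lt_reg_r (/ INR n)); [apply Rinv_0_lt_compat; lra | unfold b in HN; lra]. }
    unfold spillage_kurt, a, b. field. lra.
  - apply (is_lim_seq_eq_target _ (3 * v ^ 2 / v ^ 2)); [field; lra|].
    seq_limit. apply pow_nonzero. lra.
Qed.

Lemma spillage_mean_asymp :
  asymp_eq (fun n => spillage_mean n (S k) phi) (fun n => INR (n - S k) * (1 - psi)).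
Proof.
  pose proof psi_bounds. pose proof psi_denom_pos.
  apply (asymp_eq_scaled _ _ (fun n => / INR n) (1 - psi));
    [lra | apply eventually_inv_INR_neq_0 | apply spillage_mean_scaled |].
  apply is_lim_seq_ext_loc with (fun n => (1 - INR (S k) * / INR n) * (1 - psi)).
  - exists (S k). intros n Hn. rewrite INR_sub_factor by lia.
    assert (0 < INR n) by (apply lt_0_INR; lia). field. split; lra.
  - eapply is_lim_seq_eq_target; [|seq_limit]. ring.
Qed.

Lemma spillage_var_asymp :
  asymp_eq (fun n => spillage_var n (S k) phi) (fun n => INR (n - S k) * psi * (1 - psi)).
Proof.
  pose proof psi_var_pos. pose proof psi_denom_pos.
  apply (asymp_eq_scaled _ _ (fun n => / INR n) (psi * (1 - psi)));
    [lra | apply eventually_inv_INR_neq_0 | apply spillage_var_scaled |].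
  apply is_lim_seq_ext_loc with (fun n => (1 - INR (S k) * / INR n) * psi * (1 - psi)).
  - exists (S k). intros n Hn. rewrite INR_sub_factor by lia.
    assert (0 < INR n) by (apply lt_0_INR; lia). field. split; lra.
  - eapply is_lim_seq_eq_target; [|seq_limit]. ring.
Qed.

Lemma spillage_skew_asymp : psi <> 1 / 2 ->
  asymp_eq (fun n => spillage_skew n (S k) phi)
           (fun n => 2 * (psi - 1 / 2) / sqrt (INR (n - S k) * psi * (1 - psi))).
Proof.
  intros Hhalf. pose proof psi_var_pos as Hv. pose proof psi_denom_pos.
  set (v := psi * (1 - psi)) in *.
  assert (Hsv : 0 < sqrt v) by (apply sqrt_lt_R0; lra).
  apply (asymp_eq_scaled _ _ (fun n => sqrt (INR n)) ((2 * psi - 1) / sqrt v));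
    [| | apply spillage_skew_scaled |].
  - apply Rmult_integral_contrapositive. split; [lra|]. apply Rinv_neq_0_compat. lra.
  - exists 1%nat. intros n Hn. apply Rgt_not_eq, sqrt_lt_R0, lt_0_INR. lia.
  - apply is_lim_seq_ext_loc with
      (fun n => 2 * (psi - 1 / 2) / sqrt ((1 - INR (S k) * / INR n) * v)).
    + exists (S (S k)). intros n Hn. pose proof (sub_div_INR_pos n (S k) ltac:(lia)).
      assert (0 < INR n) by (apply lt_0_INR; lia).
      replace (INR (n - S k) * psi * (1 - psi)) with (INR n * ((1 - INR (S k) * / INR n) * v))
        by ((rewrite INR_sub_factor by lia); unfold v; ring).
      rewrite (sqrt_mult_alt (INR n)) by lra.
      assert (0 < sqrt ((1 - INR (S k) * / INR n) * v)) by (apply sqrt_lt_R0; nra).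
      assert (0 < sqrt (INR n)) by (apply sqrt_lt_R0; lra).
      field. repeat split; lra.
    + eapply is_lim_seq_eq_target; [|seq_limit];
        rewrite ?Rmult_0_r, ?Rminus_0_r, ?Rmult_1_l; [field|..]; lra.
Qed.

Lemma spillage_kurt_asymp :
  asymp_eq (fun n => spillage_kurt n (S k) phi)
    (fun n => 3 + (1 - 6 * psi * (1 - psi)) / (INR (n - S k) * psi * (1 - psi))).
Proof.
  pose proof psi_var_pos as Hv. pose proof psi_denom_pos.
  set (v := psi * (1 - psi)) in *.
  apply (asymp_eq_scaled _ _ (fun _ => 1) 3); [lra | exists 0%nat; intros; lra | |].
  - apply (is_lim_seq_ext (fun n => spillage_kurt n (S k) phi)); [intros; ring|].
    apply spillage_kurt_limit.
  - apply is_lim_seq_ext_loc with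
      (fun n => 3 + / INR n * (1 - 6 * v) / ((1 - INR (S k) * / INR n) * v)).
    + exists (S (S k)). intros n Hn. pose proof (sub_div_INR_pos n (S k) ltac:(lia)).
      assert (0 < INR n) by (apply lt_0_INR; lia).
      assert (INR (S k) < INR n) by (apply lt_INR; lia).
      replace (1 - 6 * psi * (1 - psi)) with (1 - 6 * v) by (unfold v; ring).
      replace (INR (n - S k) * psi * (1 - psi)) with (INR n * ((1 - INR (S k) * / INR n) * v))
        by ((rewrite INR_sub_factor by lia); unfold v; ring).
      field. repeat split; lra.
    + apply (is_lim_seq_eq_target _ (3 + 0 * (1 - 6 * v) / ((1 - INR (S k) * 0) * v)));
        [field; lra|].
      seq_limit. rewrite Rmult_0_r, Rminus_0_r, Rmult_1_l. lra.
Qed.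

End Asymptotics.

Theorem theorem3 (k : nat) (phi : R) (hk : (1 <= k)%nat) (hphi : 0 < phi) :
  let psi := phi / (INR k + phi) in
  (forall l : nat, is_lim_seq (fun n => Hl k phi l n) (psi ^ l)) /\
  asymp_eq (fun n => spillage_mean n k phi)
           (fun n => INR (n - k) * (1 - psi)) /\
  asymp_eq (fun n => spillage_var n k phi)
           (fun n => INR (n - k) * psi * (1 - psi)) /\
  (psi <> 1 / 2 ->
   asymp_eq (fun n => spillage_skew n k phi)
            (fun n => 2 * (psi - 1 / 2) / sqrt (INR (n - k) * psi * (1 - psi)))) /\
  asymp_eq (fun n => spillage_kurt n k phi)
           (fun n => 3 + (1 - 6 * psi * (1 - psi)) / (INR (n - k) * psi * (1 - psi))).
Proof.
  intros psi. destruct k as [|k]; [lia|].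
  repeat split.
  - apply Hl_limit; auto.
  - apply spillage_mean_asymp; auto.
  - apply spillage_var_asymp; auto.
  - apply spillage_skew_asymp; auto.
  - apply spillage_kurt_asymp; auto.
Qed.
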